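(* For each sample size $n$, let $\hat\theta_u,\hat\theta_b$ be real-valued estimators and let $\hat\sigma^2_u,\hat\sigma^2_b,\hat\sigma_{bu}$ be real-valued estimators (all depending on $n$). Suppose that, as $n\to\infty$, $\hat\theta_b \to \theta_0+\mu$ in probability, $\hat\theta_u\to\theta_0$ in probability, and $n\hat\sigma^2_u\to\nu_u$, $n\hat\sigma^2_b\to\nu_b$, $n\hat\sigma_{bu}\to\nu_{bu}$ in probability, where $\theta_0,\mu,\nu_u,\nu_b,\nu_{bu}$ are finite constants. Define $$\hat\lambda=\frac{\hat\sigma^2_u-\hat\sigma_{bu}}{(\hat\theta_u-\hat\theta_b)^2+\hat\sigma^2_u+\hat\sigma^2_b-2\hat\sigma_{bu}},\qquad \hat\theta_{\hat\lambda}=\hat\lambda\hat\theta_b+(1-\hat\lambda)\hat\theta_u .$$ Then, if $\mu\neq 0$, we have $\hat\lambda\to 0$ in probability and $\hat\theta_{\hat\lambda}\to\theta_0$ in probability.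
   Context: $\theta_0\in\mathbb{R}$ is the target (causal) parameter; $\hat\theta_u$ is thought of as an (asymptotically) unbiased estimator, $\hat\theta_b$ as a possibly biased estimator with asymptotic bias $\mu$, and $\hat\sigma^2_u,\hat\sigma^2_b,\hat\sigma_{bu}$ as estimates of $\mathrm{Var}(\hat\theta_u)$, $\mathrm{Var}(\hat\theta_b)$ and $\mathrm{Cov}(\hat\theta_b,\hat\theta_u)$. $\hat\theta_{\hat\lambda}$ is called the combination estimator. *)

From HB Require Import structures.
From mathcomp Require Import all_boot all_order all_algebra.
From mathcomp Require Import all_classical all_reals all_analysis.
Set Implicit Arguments. Unset Strict Implicit. Unset Printing Implicit Defensive.
Import Order.TTheory GRing.Theory Num.Theory.
Import numFieldNormedType.Exports.
Local Open Scope classical_set_scope.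
Local Open Scope ring_scope.

Definition cvg_in_prob d (T : measurableType d) (R : realType)
  (P : probability T R) (X : nat -> T -> R) (c : R) : Prop :=
  forall eps : R, 0 < eps ->
    (fun n => P [set w | eps <= `|X n w - c|]) @ \oo --> 0%E.

Definition lambda_hat (R : realType) (tu tb s2u s2b sbu : R) : R :=
  (s2u - sbu) / ((tu - tb) ^+ 2 + s2u + s2b - 2 * sbu).

Definition comb_est (R : realType) (tu tb s2u s2b sbu : R) : R :=
  let l := lambda_hat tu tb s2u s2b sbu in l * tb + (1 - l) * tu.

From HB Require Import structures.
From mathcomp Require Import all_boot all_order all_algebra.
From mathcomp Require Import all_classical all_reals all_analysis.
From mathcomp Require Import measurable_realfun ring lra.
Import Order.TTheory GRing.Theory Num.Theory.
Import numFieldNormedType.Exports.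
Set Implicit Arguments. Unset Strict Implicit. Unset Printing Implicit Defensive.
Local Open Scope classical_set_scope.
Local Open Scope ring_scope.

(* Multiplying numerator and denominator by n gives
     lambda_hat = n (s2u - sbu) / (n (tu - tb)^2 + n s2u + n s2b - 2 n sbu).
   Where the rescaled variance estimates are within 1 of their limits, the numerator
   is bounded and the denominator is at least n (tu - tb)^2 minus a constant; as
   tb - tu is close to mu <> 0, it grows like n mu^2, so lambda_hat -> 0.  Then
   comb_est - theta0 = lambda_hat (tb - tu) + (tu - theta0) with tb - tu bounded.
   These bounds are uniform on the event where all five statistics are close to their
   limits, and the complement of that event has vanishing probability by the union
   bound. *)

Lemma invr_measurable (R : realType) : measurable_fun setT (@GRing.inv R).
Proof.
have -> : @GRing.inv R = fun x => if x == 0 then 0 else x^-1.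
  by apply: funext => x; case: eqP => // ->; rewrite invr0.
apply: measurable_fun_if => //.
  exact: measurable_fun_eqr.
apply: subspace_continuous_measurable_fun; first exact: measurable_fun_eqr.
apply: continuous_in_subspaceT => x; rewrite inE /= => -[_ /negbT x_neq0].
exact: inv_continuous.
Qed.

Section measurability.
Context d (T : measurableType d) (R : realType).
Implicit Types (f tu tb s2u s2b sbu : T -> R).

Lemma measurable_deviation f (c eps : R) :
  measurable_fun setT f -> measurable [set w | eps <= `|f w - c|].
Proof.
move=> mf; rewrite -[X in measurable X]setTI.
have mdev : measurable_fun setT (fun w => eps <= `|f w - c|).
  apply: measurable_fun_ler; first exact: measurable_cst.
  apply: measurableT_comp (@normr_measurable R setT) _.
  exact: measurable_funB.
by have := mdev measurableT [set true] I.
Qed.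

Lemma measurable_lambda_hat tu tb s2u s2b sbu :
  measurable_fun setT tu -> measurable_fun setT tb -> measurable_fun setT s2u ->
  measurable_fun setT s2b -> measurable_fun setT sbu ->
  measurable_fun setT (fun w => lambda_hat (tu w) (tb w) (s2u w) (s2b w) (sbu w)).
Proof.
move=> mtu mtb ms2u ms2b msbu; apply: measurable_funM; first exact: measurable_funB.
apply: measurableT_comp (@invr_measurable R) _.
apply: measurable_funB; last exact: measurable_funM.
apply: measurable_funD => //; apply: measurable_funD => //.
exact/measurable_funX/measurable_funB.
Qed.

Lemma measurable_comb_est tu tb s2u s2b sbu :
  measurable_fun setT tu -> measurable_fun setT tb -> measurable_fun setT s2u ->
  measurable_fun setT s2b -> measurable_fun setT sbu ->
  measurable_fun setT (fun w => comb_est (tu w) (tb w) (s2u w) (s2b w) (sbu w)).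
Proof.
move=> mtu mtb ms2u ms2b msbu.
have ml := measurable_lambda_hat mtu mtb ms2u ms2b msbu.
by apply: measurable_funD; apply: measurable_funM => //; exact: measurable_funB.
Qed.

End measurability.

Section vanishing_events.
Context d (T : measurableType d) (R : realType).
Variable mu : {measure set T -> \bar R}.

Lemma cvg_measureU0 (A B : nat -> set T) :
  (forall n, measurable (A n)) -> (forall n, measurable (B n)) ->
  (fun n => mu (A n)) @ \oo --> 0%E -> (fun n => mu (B n)) @ \oo --> 0%E ->
  (fun n => mu (A n `|` B n)) @ \oo --> 0%E.
Proof.
move=> mA mB muA0 muB0.
apply: (squeeze_cvge (f := cst 0%E) (h := fun n => mu (A n) + mu (B n))%E).
- by near=> n; rewrite measure_ge0 measureU2.
- exact: cvg_cst.
- by rewrite -(adde0 0%E); exact: cvgeD.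
Unshelve. all: by end_near.
Qed.

Lemma cvg_measure_bigsetU0 (I : Type) (r : seq I) (A : I -> nat -> set T) :
  (forall i n, measurable (A i n)) -> (forall i, (fun n => mu (A i n)) @ \oo --> 0%E) ->
  (fun n => mu (\big[setU/set0]_(i <- r) A i n)) @ \oo --> 0%E.
Proof.
move=> mA muA0; elim: r => [|i r IHr].
  by under eq_fun do rewrite big_nil measure0; exact: cvg_cst.
under eq_fun do rewrite big_cons.
apply: cvg_measureU0 => // n.
exact: bigsetU_measurable.
Qed.

End vanishing_events.

Section transfer.
Context d (T : measurableType d) (R : realType) (P : probability T R).

Lemma cvg_in_prob_transfer (I : finType) (X : I -> nat -> T -> R) (c : I -> R)
    (Y : nat -> T -> R) (y : R) :
  (forall i n, measurable_fun setT (X i n)) -> (forall n, measurable_fun setT (Y n)) ->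
  (forall i, cvg_in_prob P (X i) (c i)) ->
  (forall eps, 0 < eps -> exists2 delta, 0 < delta &
    \forall n \near \oo, forall w, (forall i, `|X i n w - c i| < delta) -> `|Y n w - y| < eps) ->
  cvg_in_prob P Y y.
Proof.
move=> mX mY cvgX ctrlY eps eps0; have [delta delta0 ctrl] := ctrlY eps eps0.
pose bad n := \big[setU/set0]_(i <- enum I) [set w | delta <= `|X i n w - c i|].
have mdev i n : measurable [set w | delta <= `|X i n w - c i|].
  exact: measurable_deviation.
have mbad n : measurable (bad n) by exact: bigsetU_measurable.
apply: (squeeze_cvge (f := cst 0%E) (h := fun n => P (bad n))); last 2 first.
- exact: cvg_cst.
- by apply: cvg_measure_bigsetU0 => // i; exact: cvgX.
apply: filterS ctrl => n ctrl_n.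
rewrite measure_ge0 /= le_measure ?inE //; first exact: measurable_deviation.
move=> w /= devY; rewrite /bad -bigcup_seq.
have [near_w|/forallPn[i]] := boolP [forall i, `|X i n w - c i| < delta].
  by have := ctrl_n w (fun i => forallP near_w i); rewrite ltNge devY.
by rewrite -leNgt => devX; exists i => //=; rewrite mem_enum.
Qed.

End transfer.

Lemma lambda_hat_scale (R : realType) (x tu tb s2u s2b sbu : R) : x != 0 ->
  lambda_hat tu tb s2u s2b sbu =
  (x * s2u - x * sbu) / (x * (tu - tb) ^+ 2 + x * s2u + x * s2b - 2 * (x * sbu)).
Proof.
move=> x_neq0; rewrite /lambda_hat.
have -> : x * s2u - x * sbu = x * (s2u - sbu) by ring.
have -> : x * (tu - tb) ^+ 2 + x * s2u + x * s2b - 2 * (x * sbu) =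
          x * ((tu - tb) ^+ 2 + s2u + s2b - 2 * sbu) by ring.
by rewrite invfM mulrACA mulfV // mul1r.
Qed.

Lemma comb_est_subr (R : realType) (theta tu tb s2u s2b sbu : R) :
  comb_est tu tb s2u s2b sbu - theta =
  lambda_hat tu tb s2u s2b sbu * (tb - tu) + (tu - theta).
Proof. by rewrite /comb_est /=; ring. Qed.

Lemma lambda_hat_small (R : realType) (K beta eps : R) : 0 < beta -> 0 < eps ->
  \forall n \near \oo, forall tu tb s2u s2b sbu : R,
    beta <= (tu - tb) ^+ 2 ->
    `|n%:R * s2u - n%:R * sbu| <= K ->
    - K <= n%:R * s2u + n%:R * s2b - 2 * (n%:R * sbu) ->
    `|lambda_hat tu tb s2u s2b sbu| < eps.
Proof.
move=> beta0 eps0.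
near=> n => tu tb s2u s2b sbu sep num_le den_ge.
have x_gt : `|K| * (1 + eps) / (eps * beta) < n%:R by near: n; exact: nbhs_infty_gtr.
set x : R := n%:R in num_le den_ge x_gt *.
have K0 : 0 <= K := le_trans (normr_ge0 _) num_le.
have x0 : 0 < x.
  by apply: le_lt_trans x_gt; rewrite !mulr_ge0 ?invr_ge0 ?mulr_ge0 //; lra.
rewrite ger0_norm // ltr_pdivrMr ?mulr_gt0 // in x_gt.
set D := x * (tu - tb) ^+ 2 + x * s2u + x * s2b - 2 * (x * sbu).
have D_ge : x * beta - K <= D by have := ler_wpM2l (ltW x0) sep; rewrite /D; lra.
have eps_D : K < eps * D.
  have := ler_wpM2l (ltW eps0) D_ge; nra.
have D0 : 0 < D by rewrite -(pmulr_rgt0 _ eps0); lra.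
rewrite (lambda_hat_scale _ _ _ _ _ (lt0r_neq0 x0)) -/D.
by rewrite normrM normfV (gtr0_norm D0) ltr_pdivrMr //; lra.
Unshelve. all: by end_near.
Qed.

Lemma dist_shift_bounds (R : realFieldType) (theta mu delta tu tb : R) :
  `|tb - (theta + mu)| < delta -> `|tu - theta| < delta -> delta <= `|mu| / 4 ->
  `|mu| / 2 <= `|tb - tu| <= `|mu| * 2.
Proof.
move=> tb_near tu_near delta_le.
have -> : tb - tu = mu + ((tb - (theta + mu)) - (tu - theta)) by ring.
set e := (tb - (theta + mu)) - (tu - theta).
have e_small : `|e| < delta * 2 by have := ler_normB (tb - (theta + mu)) (tu - theta); lra.
have e_lo := lerB_normD mu e; have e_hi := ler_normD mu e.
by apply/andP; split; lra.
Qed.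

Section combination_estimator_bounds.
Variables (R : realType) (theta0 mu nu_u nu_b nu_bu : R).
Hypothesis mu_neq0 : mu != 0.

Definition near_limits (delta : R) (n : nat) (tu tb s2u s2b sbu : R) : Prop :=
  [/\ `|tb - (theta0 + mu)| < delta, `|tu - theta0| < delta,
      `|n%:R * s2u - nu_u| < delta, `|n%:R * s2b - nu_b| < delta
    & `|n%:R * sbu - nu_bu| < delta].

Lemma near_limits_le delta delta' n tu tb s2u s2b sbu : delta <= delta' ->
  near_limits delta n tu tb s2u s2b sbu -> near_limits delta' n tu tb s2u s2b sbu.
Proof. by move=> le_delta [? ? ? ? ?]; split; apply: lt_le_trans le_delta. Qed.

Lemma lambda_hat_near0 eps : 0 < eps -> exists2 delta : R, 0 < delta &
  \forall n \near \oo, forall tu tb s2u s2b sbu,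
    near_limits delta n tu tb s2u s2b sbu -> `|lambda_hat tu tb s2u s2b sbu| < eps.
Proof.
move=> eps0; set m := `|mu|; have m0 : 0 < m by rewrite normr_gt0.
set K := `|nu_u| + `|nu_b| + 2 * `|nu_bu| + 4.
have beta0 : 0 < m ^+ 2 / 4 by rewrite divr_gt0 // exprn_gt0.
set delta := Num.min 1 (m / 4).
have delta1 : delta <= 1 by rewrite ge_min lexx.
have delta_m : delta <= m / 4 by rewrite ge_min lexx orbT.
exists delta; first by rewrite lt_min ltr01 divr_gt0.
apply: filterS (lambda_hat_small K beta0 eps0) => n small tu tb s2u s2b sbu.
case=> tb_near tu_near /ltr_normlP[su_lo su_hi] /ltr_normlP[sb_lo sb_hi].
move=> /ltr_normlP[sbu_lo sbu_hi].
have norm_bounds (z : R) : - `|z| <= z <= `|z|.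
  by rewrite ler_norm andbT lerNl -normrN ler_norm.
have /andP[nu_u_lo nu_u_hi] := norm_bounds nu_u.
have /andP[nu_b_lo nu_b_hi] := norm_bounds nu_b.
have /andP[nu_bu_lo nu_bu_hi] := norm_bounds nu_bu.
apply: small; last by rewrite /K; lra.
- have /andP[sep _] := dist_shift_bounds tb_near tu_near delta_m.
  have sq : (m / 2) ^+ 2 <= (tb - tu) ^+ 2.
    rewrite -(real_normK (num_real (tb - tu))).
    by apply: lerXn2r; rewrite ?nnegrE // divr_ge0 // ltW.
  have -> : m ^+ 2 / 4 = (m / 2) ^+ 2 by field.
  by have -> : (tu - tb) ^+ 2 = (tb - tu) ^+ 2 by ring.
- by rewrite ler_norml; apply/andP; split; rewrite /K; lra.
Qed.

Lemma comb_est_near eps : 0 < eps -> exists2 delta : R, 0 < delta &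
  \forall n \near \oo, forall tu tb s2u s2b sbu,
    near_limits delta n tu tb s2u s2b sbu ->
    `|comb_est tu tb s2u s2b sbu - theta0| < eps.
Proof.
move=> eps0; set m := `|mu|; have m0 : 0 < m by rewrite normr_gt0.
have eps_m0 : 0 < eps / (4 * m) by rewrite divr_gt0 // mulr_gt0.
have [delta delta0 lam_small] := lambda_hat_near0 eps_m0.
set delta' := Num.min delta (Num.min (eps / 2) (m / 4)).
have le_delta : delta' <= delta by rewrite ge_min lexx.
have le_eps : delta' <= eps / 2 by rewrite !ge_min lexx orbT.
have le_m : delta' <= m / 4 by rewrite !ge_min lexx !orbT.
exists delta'; first by rewrite !lt_min delta0 !divr_gt0.
apply: filterS lam_small => n lam_small tu tb s2u s2b sbu near_n.
have [tb_near tu_near _ _ _] := near_n.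
have lam := lam_small _ _ _ _ _ (near_limits_le le_delta near_n).
have /andP[_ dist_le] := dist_shift_bounds tb_near tu_near le_m.
have lam_dist := ler_pM (normr_ge0 _) (normr_ge0 _) (ltW lam) dist_le.
rewrite (_ : eps / (4 * m) * (m * 2) = eps / 2) in lam_dist; last first.
  by field; rewrite gt_eqF.
rewrite comb_est_subr; apply: le_lt_trans (ler_normD _ _) _.
by rewrite normrM; lra.
Qed.

End combination_estimator_bounds.

Theorem theorem1 (d : measure_display) (T : measurableType d) (R : realType)
  (P : probability T R)
  (tu tb s2u s2b sbu : nat -> T -> R)
  (theta0 mu nu_u nu_b nu_bu : R)
  (mtu : forall n, measurable_fun setT (tu n))
  (mtb : forall n, measurable_fun setT (tb n))
  (ms2u : forall n, measurable_fun setT (s2u n))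
  (ms2b : forall n, measurable_fun setT (s2b n))
  (msbu : forall n, measurable_fun setT (sbu n)) :
  cvg_in_prob P tb (theta0 + mu) ->
  cvg_in_prob P tu theta0 ->
  cvg_in_prob P (fun n w => n%:R * s2u n w) nu_u ->
  cvg_in_prob P (fun n w => n%:R * s2b n w) nu_b ->
  cvg_in_prob P (fun n w => n%:R * sbu n w) nu_bu ->
  mu != 0 ->
  cvg_in_prob P
    (fun n w => lambda_hat (tu n w) (tb n w) (s2u n w) (s2b n w) (sbu n w)) 0
  /\
  cvg_in_prob P
    (fun n w => comb_est (tu n w) (tb n w) (s2u n w) (s2b n w) (sbu n w)) theta0.
Proof.
move=> cvg_tb cvg_tu cvg_s2u cvg_s2b cvg_sbu mu_neq0.
pose X (i : 'I_5) : nat -> T -> R := match val i with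
  | 0 => tb | 1 => tu | 2 => fun n w => n%:R * s2u n w
  | 3 => fun n w => n%:R * s2b n w | _ => fun n w => n%:R * sbu n w end.
pose c (i : 'I_5) : R := match val i with
  | 0 => theta0 + mu | 1 => theta0 | 2 => nu_u | 3 => nu_b | _ => nu_bu end.
have mX i n : measurable_fun setT (X i n).
  by case: i => -[|[|[|[|k]]]] ? //=; apply: measurable_funM => //; exact: measurable_cst.
have cvgX i : cvg_in_prob P (X i) (c i) by case: i => -[|[|[|[|k]]]] ?.
have X_near delta n w : (forall i, `|X i n w - c i| < delta) ->
    near_limits theta0 mu nu_u nu_b nu_bu delta n
      (tu n w) (tb n w) (s2u n w) (s2b n w) (sbu n w).
  move=> near_w; split; [exact: (near_w (@Ordinal 5 0 isT))|exact: (near_w (@Ordinal 5 1 isT))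
    |exact: (near_w (@Ordinal 5 2 isT))|exact: (near_w (@Ordinal 5 3 isT))
    |exact: (near_w (@Ordinal 5 4 isT))].
split; apply: (cvg_in_prob_transfer mX _ cvgX).
- by move=> n; exact: measurable_lambda_hat.
- move=> eps /(lambda_hat_near0 theta0 nu_u nu_b nu_bu mu_neq0)[delta delta0 lam_small].
  exists delta => //; apply: filterS lam_small => n lam_small w /X_near.
  by rewrite subr0; exact: lam_small.
- by move=> n; exact: measurable_comb_est.
- move=> eps /(comb_est_near theta0 nu_u nu_b nu_bu mu_neq0)[delta delta0 comb_near].
  exists delta => //; apply: filterS comb_near => n comb_near w /X_near.
  exact: comb_near.
Qed.
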